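(* Let $G=(V,E)$ be a finite connected simple graph with vertex-weight $m_0\colon V\to\mathbb{R}_{>0}$ and distance parameter $d\colon E\to\mathbb{R}_{>0}$. Then $$\delta(G,m_0,d)=\max\{1-\nu(G,m_0,d),\,0\}.$$
   Context: Let $M=\sum_{u\in V}m_0(u)$ and $\|\cdot\|$ the Euclidean norm on $\mathbb{R}^{|V|}$. For $\varphi\colon V\to\mathbb{R}^{|V|}$, $\mathrm{bar}(\varphi)=\frac1M\sum_u m_0(u)\varphi(u)$. Define $\delta(G,m_0,d)=\inf\|\mathrm{bar}(\varphi)\|^2$ over all $\varphi\colon V\to\mathbb{R}^{|V|}$ with $\sum_u m_0(u)\|\varphi(u)\|^2=M$ and $\|\varphi(u)-\varphi(v)\|\le d(uv)$ for all $uv\in E$. Define $\nu(G,m_0,d)=\sup\frac1M\sum_{u}m_0(u)\|\varphi(u)\|^2$ over all $\varphi\colon V\to\mathbb{R}^{|V|}$ with $\sum_u m_0(u)\varphi(u)=0$ and $\|\varphi(u)-\varphi(v)\|\le d(uv)$ for all $uv\in E$. *)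

From HB Require Import structures.
From mathcomp Require Import all_boot all_order all_algebra.
From mathcomp Require Import boolp classical_sets reals.
Set Implicit Arguments. Unset Strict Implicit. Unset Printing Implicit Defensive.
Import Order.TTheory GRing.Theory Num.Theory.
Local Open Scope ring_scope.
Local Open Scope classical_set_scope.

Section Defs.
Variables (R : realType) (V : finType).

Definition sqnorm (x : 'rV[R]_#|V|) : R := \sum_(i < #|V|) (x 0 i) ^+ 2.
Definition enorm (x : 'rV[R]_#|V|) : R := Num.sqrt (sqnorm x).

(* simple graph: adj symmetric irreflexive relation on V; edges are the
   unordered pairs [set u; v] with adj u v *)
Definition simple_graph (adj : rel V) : Prop :=
  symmetric adj /\ irreflexive adj.
Definition connected_graph (adj : rel V) : Prop :=
  forall u v : V, connect adj u v.

Variables (adj : rel V) (m0 : V -> R) (d : {set V} -> R).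

Definition total_mass : R := \sum_(u : V) m0 u.

Definition bar (phi : V -> 'rV[R]_#|V|) : 'rV[R]_#|V| :=
  total_mass^-1 *: \sum_(u : V) m0 u *: phi u.

Definition edge_lipschitz (phi : V -> 'rV[R]_#|V|) : Prop :=
  forall u v : V, adj u v -> enorm (phi u - phi v) <= d [set u; v].

Definition delta : R :=
  inf [set x : R | exists phi : V -> 'rV[R]_#|V|,
        [/\ \sum_(u : V) m0 u * sqnorm (phi u) = total_mass,
            edge_lipschitz phi &
            x = sqnorm (bar phi)]].

Definition nu : R :=
  sup [set x : R | exists phi : V -> 'rV[R]_#|V|,
        [/\ \sum_(u : V) m0 u *: phi u = 0,
            edge_lipschitz phi &
            x = total_mass^-1 * \sum_(u : V) m0 u * sqnorm (phi u)]].

End Defs.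

From HB Require Import structures.
From mathcomp Require Import all_boot all_order all_algebra.
From mathcomp Require Import boolp classical_sets reals.
From mathcomp Require Import ring lra.
Import Order.TTheory GRing.Theory Num.Theory.
Local Open Scope ring_scope.
Set Implicit Arguments. Unset Strict Implicit. Unset Printing Implicit Defensive.

(* Split a map phi admissible for delta into its barycentre b and its centred
   part psi = phi - b.  By the parallel-axis identity the normalisation
   sum m0 |phi|^2 = M reads |b|^2 + variance psi = 1, and b may be any vector
   of that norm, so the values of delta's objective are exactly the 1 - q for
   the values q <= 1 of nu's objective.  The set of the latter contains 0, is
   bounded (along a path, connectedness bounds the coordinates of a centred
   edge-Lipschitz map) and is star-shaped, since sqrt s *: psi stays admissible
   for 0 <= s <= 1; hence the infimum of 1 - q is 1 - min(nu, 1). *)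

Section StarShaped.
Variable R : realType.
Local Open Scope classical_set_scope.

Lemma inf_onem_starshaped (S : set R) :
  S 0 -> has_ubound S -> (forall s q, 0 <= s <= 1 -> S q -> S (s * q)) ->
  inf [set 1 - q | q in S `&` [set q | q <= 1]] = Num.max (1 - sup S) 0.
Proof.
move=> S0 ubS starS; have supS : has_sup S by split; first by exists 0.
pose T := [set 1 - q | q in S `&` [set q | q <= 1]]; rewrite -/T.
have T1 : T 1 by rewrite /T /image /=; exists 0; rewrite ?subr0.
have T_ge x : T x -> Num.max (1 - sup S) 0 <= x.
  case=> q [Sq le_q1] <-; rewrite ge_max subr_ge0 le_q1 andbT lerD2l lerN2.
  exact: ub_le_sup.
have lbT : has_lbound T by exists 0 => x /T_ge; rewrite ge_max => /andP[].
apply/le_anti/andP; split; last by apply: lb_le_inf => //; exists 1.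
have [le_sup1 | lt1_sup] := lerP (sup S) 1.
  rewrite (max_idPl _) ?subr_ge0 //.
  suff : sup S <= 1 - inf T by lra.
  apply: ge_sup => [|q Sq]; first by exists 0.
  have le_q1 : q <= 1 by apply: le_trans le_sup1; exact: ub_le_sup.
  have := ge_inf lbT (ex_intro2 _ _ q (conj Sq le_q1) erefl); lra.
have [q Sq lt1q] := sup_gt (ex_intro _ 0 S0) lt1_sup.
have S1 : S 1.
  have q_gt0 : 0 < q by apply: lt_trans lt1q.
  rewrite -(mulVf (lt0r_neq0 q_gt0)); apply: starS Sq.
  by rewrite invr_ge0 ltW //= invf_le1 // ltW.
have T0 : T 0 by rewrite /T /image /=; exists 1; rewrite ?subrr.
by apply: le_trans (ge_inf lbT T0) _; rewrite le_max lexx orbT.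
Qed.

End StarShaped.

Section Sqnorm.
Variables (R : realType) (V : finType).
Local Notation vec := 'rV[R]_#|V|.

Lemma sqnorm_ge0 (x : vec) : 0 <= sqnorm x.
Proof. by apply: sumr_ge0 => i _; rewrite sqr_ge0. Qed.

Lemma sqnorm0 : sqnorm (0 : vec) = 0.
Proof. by apply: big1 => i _; rewrite mxE expr0n. Qed.

Lemma sqnormZ c (x : vec) : sqnorm (c *: x) = c ^+ 2 * sqnorm x.
Proof. by rewrite /sqnorm mulr_sumr; apply: eq_bigr => i _; rewrite mxE exprMn. Qed.

Lemma sqnorm_delta_mx i : sqnorm (delta_mx 0 i : vec) = 1.
Proof.
rewrite /sqnorm (bigD1 i) //= big1 => [|j /negbTE neq_ji]; last first.
  by rewrite mxE neq_ji andbF expr0n.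
by rewrite mxE !eqxx expr1n addr0.
Qed.

Lemma enorm0 : enorm (0 : vec) = 0.
Proof. by rewrite /enorm sqnorm0 sqrtr0. Qed.

Lemma norm_coord_le_enorm (x : vec) i : `|x 0 i| <= enorm x.
Proof.
rewrite /enorm -sqrtr_sqr ler_sqrt ?sqnorm_ge0 //.
by rewrite /sqnorm (bigD1 i) //= lerDl; apply: sumr_ge0 => j _; apply: sqr_ge0.
Qed.

Lemma sum_coord_centered (I : finType) (m : I -> R) (psi : I -> vec) i :
  \sum_u m u *: psi u = 0 -> \sum_u m u * psi u 0 i = 0.
Proof.
move=> /(congr1 (fun A : vec => A 0 i)); rewrite summxE mxE; apply: etrans.
by apply: eq_bigr => u _; rewrite mxE.
Qed.

Lemma sum_sqnorm_shift_centered (I : finType) (m : I -> R) (psi : I -> vec) b :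
  \sum_u m u *: psi u = 0 ->
  \sum_u m u * sqnorm (b + psi u) =
    (\sum_u m u) * sqnorm b + \sum_u m u * sqnorm (psi u).
Proof.
move=> /sum_coord_centered centered.
have expand i : \sum_u m u * ((b + psi u) 0 i) ^+ 2 =
    (\sum_u m u) * b 0 i ^+ 2 + \sum_u m u * psi u 0 i ^+ 2.
  transitivity (\sum_u (m u * b 0 i ^+ 2 + 2 * b 0 i * (m u * psi u 0 i)
                        + m u * psi u 0 i ^+ 2)).
    by apply: eq_bigr => u _; rewrite mxE; ring.
  by rewrite !big_split /= -mulr_sumr centered mulr0 addr0 -mulr_suml.
rewrite /sqnorm mulr_sumr; under eq_bigr do rewrite mulr_sumr.
under [X in _ = _ + X]eq_bigr do rewrite mulr_sumr.
rewrite exchange_big [X in _ + X]exchange_big -big_split /=.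
by apply: eq_bigr => i _; apply: expand.
Qed.

End Sqnorm.

Section Oscillation.
Variables (R : realType) (V : finType) (adj : rel V) (f : V -> R) (C : R).
Hypothesis edge_bound : forall x y, adj x y -> `|f x - f y| <= C.

Lemma path_oscillation x p : path adj x p -> `|f x - f (last x p)| <= C *+ size p.
Proof.
elim: p x => [|y p IHp] x /=; first by rewrite subrr normr0.
case/andP=> adj_xy path_p; apply: le_trans (ler_distD (f y) _ _) _.
by rewrite mulrS lerD ?edge_bound ?IHp.
Qed.

Lemma connect_oscillation u v : 0 <= C -> connect adj u v ->
  `|f u - f v| <= C *+ #|V|.
Proof.
move=> C_ge0 /connectP[p path_p ->]; have [q path_q uniq_q _] := shortenP path_p.
apply: le_trans (path_oscillation path_q) (ler_wpMn2l C_ge0 _).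
by have := max_card (mem (u :: q)); rewrite (card_uniqP uniq_q) /= => /ltnW.
Qed.

End Oscillation.

Lemma centered_norm_le (R : realType) (I : finType) (m f : I -> R) (C : R) u :
  (forall v, 0 <= m v) -> 0 < \sum_v m v -> \sum_v m v * f v = 0 ->
  (forall v, `|f u - f v| <= C) -> `|f u| <= C.
Proof.
move=> m_ge0 mass_gt0 centered osc_le.
rewrite -(ler_pM2l mass_gt0) -[X in X * `|_|](ger0_norm (ltW mass_gt0)) -normrM.
have -> : (\sum_v m v) * f u = \sum_v m v * (f u - f v).
  rewrite mulr_suml; under [RHS]eq_bigr do rewrite mulrBr.
  by rewrite sumrB centered subr0.
apply: le_trans (ler_norm_sum _ _ _) _; rewrite mulr_suml; apply: ler_sum => v _.
by rewrite normrM ger0_norm // ler_wpM2l.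
Qed.

Section Graph.
Variables (R : realType) (V : finType) (adj : rel V) (m0 : V -> R) (d : {set V} -> R).
Local Notation vec := 'rV[R]_#|V|.
Local Notation M := (total_mass m0).
Local Notation lipschitz := (edge_lipschitz adj d).
Local Open Scope classical_set_scope.

Definition centered (phi : V -> vec) : Prop := \sum_u m0 u *: phi u = 0.

Definition variance (phi : V -> vec) : R := M^-1 * \sum_u m0 u * sqnorm (phi u).

Definition nu_set : set R :=
  [set x | exists phi, [/\ centered phi, lipschitz phi & x = variance phi]].

Definition delta_set : set R :=
  [set x | exists phi : V -> vec,
     [/\ \sum_u m0 u * sqnorm (phi u) = M, lipschitz phi & x = sqnorm (bar m0 phi)]].

Lemma edge_lipschitz_shift b phi : lipschitz (fun u => b + phi u) <-> lipschitz phi.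
Proof. by split=> lip_phi u v /lip_phi; rewrite opprD addrACA subrr add0r. Qed.

Lemma edge_lipschitz_scale t phi :
  0 <= t <= 1 -> lipschitz phi -> lipschitz (fun u => t *: phi u).
Proof.
move=> /andP[t_ge0 t_le1] lip_phi u v /lip_phi; apply: le_trans.
rewrite -scalerBr /enorm ler_sqrt ?sqnorm_ge0 // sqnormZ.
by rewrite ler_piMl ?sqnorm_ge0 ?expr_le1.
Qed.

Lemma centered_sub_bar phi : M != 0 -> centered (fun u => phi u - bar m0 phi).
Proof.
move=> M_neq0; rewrite /centered; under eq_bigr do rewrite scalerBr.
by rewrite sumrB -scaler_suml /bar scalerA mulfV // scale1r subrr.
Qed.

Lemma bar_shift_centered b psi : M != 0 -> centered psi ->
  bar m0 (fun u => b + psi u) = b.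
Proof.
move=> M_neq0 c_psi; rewrite /bar; under eq_bigr do rewrite scalerDr.
by rewrite big_split /= c_psi addr0 -scaler_suml scalerA mulVf // scale1r.
Qed.

Lemma sum_sqnorm_shift b psi : M != 0 -> centered psi ->
  \sum_u m0 u * sqnorm (b + psi u) = M * (sqnorm b + variance psi).
Proof.
move=> M_neq0 c_psi; rewrite sum_sqnorm_shift_centered //.
by rewrite mulrDr /variance mulrA mulfV // mul1r.
Qed.

Hypothesis V_gt0 : (0 < #|V|)%N.
Hypothesis m0_gt0 : forall u, 0 < m0 u.
Hypothesis adj_connected : connected_graph adj.
Hypothesis d_gt0 : forall u v, adj u v -> 0 < d [set u; v]%SET.

Lemma total_mass_gt0 : 0 < M.
Proof.
have [u _] := card_gt0P V_gt0; rewrite /total_mass (bigD1 u) //=.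
by rewrite ltr_wpDr ?m0_gt0 // sumr_ge0 // => v _; apply: ltW.
Qed.

Lemma variance_le B psi : (forall u, sqnorm (psi u) <= B) -> variance psi <= B.
Proof.
move=> psi_le; rewrite /variance ler_pdivrMl ?total_mass_gt0 // /total_mass.
by rewrite mulr_suml; apply: ler_sum => u _; rewrite ler_pM2l.
Qed.

Let M_neq0 : M != 0 := lt0r_neq0 total_mass_gt0.

Lemma delta_setE : delta_set = (fun q => 1 - q) @` (nu_set `&` [set q | q <= 1]).
Proof.
apply/seteqP; split=> [_ [phi [mass_phi lip_phi ->]] |
                       _ [_ [[psi [c_psi lip_psi ->]] var_le1] <-]].
  set b := bar m0 phi; pose psi u := phi u - b.
  have phiE u : phi u = b + psi u by rewrite /psi addrC subrK.
  have c_psi : centered psi := centered_sub_bar phi M_neq0.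
  have mass_split : sqnorm b + variance psi = 1.
    apply: (mulfI M_neq0); rewrite mulr1 -sum_sqnorm_shift // -mass_phi.
    by apply: eq_bigr => u _; rewrite -phiE.
  exists (variance psi); last lra.
  split; last by rewrite /= -mass_split lerDr sqnorm_ge0.
  exists psi; split=> //; apply/(edge_lipschitz_shift b) => u v.
  by rewrite -!phiE; apply: lip_phi.
pose b := Num.sqrt (1 - variance psi) *: (delta_mx 0 (Ordinal V_gt0) : vec).
have sqnorm_b : sqnorm b = 1 - variance psi.
  by rewrite sqnormZ sqnorm_delta_mx mulr1 sqr_sqrtr // subr_ge0.
exists (fun u => b + psi u); split.
- by rewrite sum_sqnorm_shift // sqnorm_b subrK mulr1.
- exact/edge_lipschitz_shift.
- by rewrite bar_shift_centered.
Qed.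

Lemma nu_set0 : nu_set 0.
Proof.
exists (fun _ => 0); split.
- by apply: big1 => u _; rewrite scaler0.
- by move=> u v /d_gt0 /ltW; rewrite subrr enorm0.
- by rewrite /variance big1 ?mulr0 // => u _; rewrite sqnorm0 mulr0.
Qed.

Lemma nu_set_scale s q : 0 <= s <= 1 -> nu_set q -> nu_set (s * q).
Proof.
move=> /andP[s_ge0 s_le1] [psi [c_psi lip_psi ->]].
exists (fun u => Num.sqrt s *: psi u); split.
- rewrite /centered; under eq_bigr do rewrite scalerA mulrC -scalerA.
  by rewrite -scaler_sumr c_psi scaler0.
- by apply: edge_lipschitz_scale; rewrite // sqrtr_ge0 -sqrtr1 ler_sqrt.
- rewrite /variance mulrCA mulr_sumr; congr (_ * _); apply: eq_bigr => u _.
  by rewrite sqnormZ sqr_sqrtr // mulrCA.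
Qed.

Lemma lipschitz_coord_bound psi u i : centered psi -> lipschitz psi ->
  `|psi u 0 i| <= (\sum_e `|d e|) *+ #|V|.
Proof.
move=> c_psi lip_psi; set D := \sum_e `|d e|.
have D_ge0 : 0 <= D by apply: sumr_ge0 => e _; apply: normr_ge0.
have coord_edge x y : adj x y -> `|psi x 0 i - psi y 0 i| <= D.
  move=> adj_xy; have := norm_coord_le_enorm (psi x - psi y) i.
  rewrite !mxE => /le_trans; apply; apply: le_trans (lip_psi _ _ adj_xy) _.
  apply: le_trans (ler_norm _) _; rewrite /D (bigD1 [set x; y]%SET) //= lerDl.
  by apply: sumr_ge0 => e _; apply: normr_ge0.
apply: (@centered_norm_le R V m0 (fun v => psi v 0 i)) => [v|||v].
- exact/ltW.
- exact: total_mass_gt0.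
- exact: sum_coord_centered.
- exact: (connect_oscillation coord_edge D_ge0 (adj_connected u v)).
Qed.

Lemma nu_set_bounded : has_ubound nu_set.
Proof.
set C := (\sum_e `|d e|) *+ #|V|.
exists (C ^+ 2 *+ #|V|) => _ [psi [c_psi lip_psi ->]].
apply: variance_le => u.
apply: le_trans (_ : _ <= \sum_(i < #|V|) C ^+ 2) _; last by rewrite sumr_const card_ord.
apply: ler_sum => i _; rewrite -real_normK ?num_real // ler_sqr ?nnegrE //.
  exact: lipschitz_coord_bound.
by apply: le_trans (lipschitz_coord_bound u i c_psi lip_psi).
Qed.

End Graph.

Unset Implicit Arguments.
Set Strict Implicit.

Theorem proposition2p4 (R : realType) (V : finType) (adj : rel V)
    (m0 : V -> R) (d : {set V} -> R) :
  (0 < #|V|)%N ->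
  simple_graph adj ->
  connected_graph adj ->
  (forall u : V, 0 < m0 u) ->
  (forall u v : V, adj u v -> 0 < d [set u; v]) ->
  delta adj m0 d = Num.max (1 - nu adj m0 d) 0.
Proof.
move=> V_gt0 _ adj_connected m0_gt0 d_gt0.
have -> : delta adj m0 d = inf (delta_set adj m0 d) by [].
rewrite delta_setE //; apply: inf_onem_starshaped.
- exact: nu_set0.
- exact: nu_set_bounded.
- exact: nu_set_scale.
Qed.
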